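(* Let $\pi=(O,h)$ be the complete prefix unfolding of a 1-safe net system. Let $e_1$ be a cut-off event of $\pi$ and $e_1'$ its corresponding event, and suppose $h(e_1\bullet)=h(e_1'\bullet)$. Then for every event $e_2$ of $\pi$, $e_1'\triangleright e_2$ implies $h(e_1)<_{tar}h(e_2)$.
   Context: Petri net system $S=(N,M_0)$, $N=(P,T,F)$, markings, enabling and firing $M'=M-\bullet t+t\bullet$ as usual; $S$ is 1-safe if every reachable marking has at most one token per place. Transition adjacency relation: $t_1<_{tar}t_2$ iff there is a reachable marking $M_s$ enabling $t_1$ such that after firing $t_1$ from $M_s$, $t_2$ is enabled. Occurrence net $O=(C,E,G)$, $x<y$ iff a directed path with at least one arc from $x$ to $y$; configurations (conflict-free, backward closed event sets), local configuration $[e]=\{x\mid x<e\text{ or }x=e\}$, $Cut(\mathcal C)=(Min(O)\cup\mathcal C\bullet)\setminus\bullet\mathcal C$, $Mark(\mathcal C)=h(Cut(\mathcal C))$. With an adequate order $\prec$ (strict well-founded partial order on configurations refining strict inclusion of local configurations), $e$ is a cut-off event if there is $e'$ with $Mark([e])=Mark([e'])$ and $[e']\prec[e]$, and $e'$ is then its corresponding event. The complete prefix unfolding is the greatest backward closed subnet of the unfolding containing no events after a cut-off event. For a set of nodes $Y$, $\bullet Y=\bigcup_{y\in Y}\bullet y$; $Max(E_0)=\{e\in E_0\mid\forall e'\in E_0: e\not<e'\}$. Max-Event Adjacency: for events $e<f$, $e\triangleright f$ iff $e\in Max(\bullet(\bullet f))$. *)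

From Stdlib Require List.
From Stdlib Require Import Relations.
From mathcomp Require Import all_boot.

Set Implicit Arguments.
Unset Strict Implicit.
Unset Printing Implicit Defensive.

Record net := Net {
  place : finType;
  trans : finType;
  pre   : trans -> place -> bool;
  post  : trans -> place -> bool
}.

Definition marking (N : net) := place N -> nat.

Definition enabled (N : net) (M : marking N) (t : trans N) : Prop :=
  forall p, pre t p -> 0 < M p.

Definition fire (N : net) (M : marking N) (t : trans N) : marking N :=
  fun p => M p - nat_of_bool (pre t p) + nat_of_bool (post t p).

Inductive reachable (N : net) (M0 : marking N) : marking N -> Prop :=
| reach_init : reachable M0 M0
| reach_step : forall M t, reachable M0 M -> enabled M t ->
                 reachable M0 (fire M t).

Definition one_safe (N : net) (M0 : marking N) : Prop :=
  forall M, reachable M0 M -> forall p, M p <= 1.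

Definition tar (N : net) (M0 : marking N) (t1 t2 : trans N) : Prop :=
  exists Ms, reachable M0 Ms /\ enabled Ms t1 /\ enabled (fire Ms t1) t2.

Record onet := ONet {
  cond  : Type;
  event : Type;
  cpre  : event -> cond -> Prop;
  cpost : event -> cond -> Prop
}.

Definition node (O : onet) := (cond O + event O)%type.

Definition arc (O : onet) (x y : node O) : Prop :=
  match x, y with
  | inl c, inr e => cpre e c
  | inr e, inl c => cpost e c
  | _, _ => False
  end.

Definition lt (O : onet) : node O -> node O -> Prop := clos_trans _ (@arc O).
Definition le (O : onet) (x y : node O) : Prop := lt x y \/ x = y.

Definition conflict (O : onet) (x y : node O) : Prop :=
  exists (e1 e2 : event O) (c : cond O),
    e1 <> e2 /\ cpre e1 c /\ cpre e2 c /\ le (inr e1) x /\ le (inr e2) y.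

Definition min_cond (O : onet) (c : cond O) : Prop := forall e, ~ cpost e c.

Definition occurrence_net (O : onet) : Prop :=
  (forall (c : cond O) e e', cpost e c -> cpost e' c -> e = e') /\
  (forall x : node O, ~ lt x x) /\
  (forall x : node O, exists l : list (node O), forall y, lt y x -> List.In y l) /\
  (forall x : node O, ~ conflict x x).

Definition coset (O : onet) (B : cond O -> Prop) : Prop :=
  forall x y, B x -> B y -> x <> y ->
    ~ lt (inl x) (inl y) /\ ~ conflict (inl x) (inl y).

Definition bij_on (X Y : Type) (A : X -> Prop) (f : X -> Y) (B : Y -> Prop) :=
  (forall x, A x -> B (f x)) /\
  (forall x y, A x -> A y -> f x = f y -> x = y) /\
  (forall y, B y -> exists x, A x /\ f x = y).

Definition branching_process (N : net) (M0 : marking N) (O : onet)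
    (hc : cond O -> place N) (he : event O -> trans N) : Prop :=
  occurrence_net O /\
  bij_on (@min_cond O) hc (fun p => 0 < M0 p) /\
  (forall e, bij_on (cpre e) hc (fun p => pre (he e) p)) /\
  (forall e, bij_on (cpost e) hc (fun p => post (he e) p)) /\
  (forall e e', he e = he e' -> (forall c, cpre e c <-> cpre e' c) -> e = e').

(* The unfolding: the branching process closed under all possible
   extensions (characterises the unfolding up to isomorphism). *)
Definition unfolding (N : net) (M0 : marking N) (O : onet)
    (hc : cond O -> place N) (he : event O -> trans N) : Prop :=
  branching_process M0 hc he /\
  (forall (t : trans N) (B : cond O -> Prop),
     coset B -> bij_on B hc (fun p => pre t p) ->
     exists e, he e = t /\ (forall c, cpre e c <-> B c)).

Definition is_config (O : onet) (Cf : event O -> Prop) : Prop :=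
  (forall e e', Cf e -> Cf e' -> ~ conflict (inr e) (inr e')) /\
  (forall e e', Cf e' -> lt (inr e) (inr e') -> Cf e).

Definition local_config (O : onet) (e : event O) : event O -> Prop :=
  fun x => lt (inr x) (inr e) \/ x = e.

Definition Cut (O : onet) (Cf : event O -> Prop) (c : cond O) : Prop :=
  (min_cond c \/ exists e, Cf e /\ cpost e c) /\ ~ (exists e, Cf e /\ cpre e c).

Definition Mark (N : net) (O : onet) (hc : cond O -> place N)
    (Cf : event O -> Prop) (p : place N) : Prop :=
  exists c, Cut Cf c /\ hc c = p.

Definition strict_incl (X : Type) (A B : X -> Prop) : Prop :=
  (forall x, A x -> B x) /\ exists x, B x /\ ~ A x.

Definition adequate_order (O : onet)
    (prec : (event O -> Prop) -> (event O -> Prop) -> Prop) : Prop :=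
  (forall A, is_config A -> ~ prec A A) /\
  (forall A B C, is_config A -> is_config B -> is_config C ->
     prec A B -> prec B C -> prec A C) /\
  well_founded (fun A B => is_config A /\ is_config B /\ prec A B) /\
  (forall e e', strict_incl (local_config e) (local_config e') ->
     prec (local_config e) (local_config e')).

Definition corresponding (N : net) (O : onet) (hc : cond O -> place N)
    (prec : (event O -> Prop) -> (event O -> Prop) -> Prop)
    (e e' : event O) : Prop :=
  (forall p, Mark hc (local_config e) p <-> Mark hc (local_config e') p) /\
  prec (local_config e') (local_config e).

Definition cutoff (N : net) (O : onet) (hc : cond O -> place N)
    (prec : (event O -> Prop) -> (event O -> Prop) -> Prop) (e : event O) : Prop :=
  exists e', corresponding hc prec e e'.

Definition in_prefix (N : net) (O : onet) (hc : cond O -> place N)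
    (prec : (event O -> Prop) -> (event O -> Prop) -> Prop) (e : event O) : Prop :=
  ~ exists e', cutoff hc prec e' /\ lt (inr e') (inr e).

Definition prepre (O : onet) (f e : event O) : Prop :=
  exists c, cpre f c /\ cpost e c.

Definition max_adj (O : onet) (e f : event O) : Prop :=
  lt (inr e) (inr f) /\ prepre f e /\
  (forall e', prepre f e' -> ~ lt (inr e) (inr e')).

Definition hpost (N : net) (O : onet) (hc : cond O -> place N)
    (e : event O) (p : place N) : Prop :=
  exists c, cpost e c /\ hc c = p.

From mathcomp Require Import all_boot zify.
From Stdlib Require Import Relations Classical FunctionalExtensionality PropExtensionality.

(* Every finite configuration D of the unfolding is realized by a reachable
   marking with support h(Cut D), and 1-safety makes h injective on Cut D:
   two conditions of one cut with the same label would put two tokens on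
   their place.  Firing the past of e1 and then e1 realizes [e1], hence also
   [e1'] because Mark([e1]) = Mark([e1']).  Extend [e1'] event by event up to
   the strict past of e2.  Since e1' |> e2, no added event g lies above e1', so
   a place in h(•g) ∩ h(e1'•) would label two distinct conditions of the cut
   of [g) ∪ [e1']; hence g consumes nothing produced by e1 and, the net being
   1-safe, commutes in front of e1.  The marking reached just before the
   postponed e1 witnesses h(e1) <_tar h(e2). *)

Set Implicit Arguments.
Unset Strict Implicit.
Unset Printing Implicit Defensive.

Lemma pred_ext (X : Type) (A B : X -> Prop) : (forall x, A x <-> B x) -> A = B.
Proof.
by move=> AB; apply: functional_extensionality => x; apply: propositional_extensionality.
Qed.

Section SafeFiring.

Variables (N : net) (M0 : marking N).
Hypothesis safe : one_safe M0.

Lemma enabledE (M : marking N) t : enabled M t <-> forall p, pre t p <= M p.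
Proof.
by split=> Ht p; case: (pre t p) (Ht p) => //=; apply.
Qed.

Lemma fire_gt0 (M : marking N) t p : M p <= 1 -> enabled M t ->
  (0 < fire M t p) = (0 < M p) && ~~ pre t p || post t p.
Proof.
move=> Mp /enabledE/(_ p); rewrite /fire.
by case: (pre t p); case: (post t p) => /=; rewrite ?andbT ?andbF ?orbT ?orbF; lia.
Qed.

Lemma fire_commute L t u : reachable M0 L -> enabled L t -> enabled (fire L t) u ->
  (forall p, ~~ (pre u p && post t p)) ->
  [/\ enabled L u, enabled (fire L u) t & fire (fire L u) t = fire (fire L t) u].
Proof.
move=> RL Lt Ltu disj; have RLt := reach_step RL Lt.
have /enabledE et := Lt; have /enabledE eu := Ltu.
have Lu : enabled L u.
  apply/enabledE => p; move: (safe RL p) (safe RLt p) (et p) (eu p) (disj p); rewrite /fire.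
  by case: (pre t p) (post t p) (pre u p) => [] [] [] //=; lia.
have RLu := reach_step RL Lu; have /enabledE eu' := Lu.
have Lut : enabled (fire L u) t.
  apply/enabledE => p; move: (safe RL p) (safe RLt p) (safe RLu p) (et p) (eu p) (disj p).
  by rewrite /fire; case: (pre t p) (post t p) (pre u p) (post u p) => [] [] [] [] //=; lia.
split=> //; apply: functional_extensionality => p.
move: (safe RL p) (safe RLt p) (safe RLu p) (et p) (eu p) (eu' p) (disj p); rewrite /fire.
by case: (pre t p) (post t p) (pre u p) (post u p) => [] [] [] [] //=; lia.
Qed.

End SafeFiring.

Section OccurrenceNet.

Variable O : onet.
Hypothesis occ : occurrence_net O.
Implicit Types (e f g : event O) (c : cond O).

Definition past (e : event O) : event O -> Prop := fun x => lt (inr x) (inr e).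

Lemma lt_irrefl (x : node O) : ~ lt x x.
Proof. by case: occ => _ []. Qed.

Lemma lt_post_pre e f c : cpost e c -> cpre f c -> lt (inr e) (inr f).
Proof. by move=> ec fc; apply: (t_trans _ _ _ (inl c)); apply: t_step. Qed.

Lemma le_lt_trans (x y z : node O) : le x y -> lt y z -> lt x z.
Proof. by case=> [xy yz|->]; first exact: t_trans xy yz. Qed.

Lemma lt_le_trans (x y z : node O) : lt x y -> le y z -> lt x z.
Proof. by move=> xy [yz|<-]; first exact: t_trans xy yz. Qed.

Lemma le_trans (x y z : node O) : le x y -> le y z -> le x z.
Proof. by move=> xy [yz|<-] //; left; exact: le_lt_trans xy yz. Qed.

Lemma lt_prepre g f : lt (inr g) (inr f) -> exists e, prepre f e /\ le (inr g) (inr e).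
Proof.
move=> gf; apply clos_trans_tn1 in gf; remember (inr f) as z eqn:Ef.
case: gf Ef => [y gy Ey | [c|e] z' cf gc Ez]; subst; [by [] | | by []].
remember (inl c) as w eqn:Ec in gc.
case: gc Ec => [y gc Ey | [c'|e] w' ec ge Ew]; subst; [| by [] |].
  by exists g; split; [exists c | right].
by exists e; split; [exists c | left; exact: clos_tn1_trans].
Qed.

Lemma max_adj_not_lt_past e f g : max_adj e f -> past f g -> ~ lt (inr e) (inr g).
Proof.
case=> _ [_ emax] /lt_prepre [e' [fe' ge']] eg.
exact: emax e' fe' (lt_le_trans eg ge').
Qed.

Lemma config_sub (G D : event O -> Prop) : is_config G -> (forall x, D x -> G x) ->
  (forall x y, D y -> lt (inr x) (inr y) -> D x) -> is_config D.
Proof. by move=> [Gcf _] DG Ddown; split=> // x y /DG Gx /DG Gy; apply: Gcf. Qed.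

Lemma local_config_is_config e : is_config (local_config e).
Proof.
have le_e x : local_config e x -> le (inr x) (inr e) by case=> [?|->]; [left|right].
split=> [x y /le_e xe /le_e ye [e1 [e2 [c [ne [e1c [e2c [e1x e2y]]]]]]]|x y [ye|->] xy].
- case: occ => _ [_ [_ /(_ (inr e))]]; apply; exists e1, e2, c.
  by do !split=> //; [exact: le_trans e1x xe | exact: le_trans e2y ye].
- by left; exact: t_trans xy ye.
- by left.
Qed.

Lemma past_is_config e : is_config (past e).
Proof.
apply: config_sub (local_config_is_config e) _ _ => [x|x y yz xy]; first by left.
exact: t_trans xy yz.
Qed.

Lemma past_finite e : exists l : list (node O), forall x, past e x -> List.In (inr x) l.
Proof. by have [l el] := occ.2.2.1 (inr e); exists l => x /el. Qed.

Lemma local_config_finite e :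
  exists l : list (node O), forall x, local_config e x -> List.In (inr x) l.
Proof. by have [l el] := past_finite e; exists (inr e :: l) => x [/el|->]; [right|left]. Qed.

Lemma min_cond_or_post c : min_cond c \/ exists e, cpost e c.
Proof.
case: (classic (min_cond c)) => [|/not_all_ex_not [e /NNPP ec]]; first by left.
by right; exists e.
Qed.

Lemma postset_in_Cut (D : event O -> Prop) e c : D e -> cpost e c ->
  (forall f, D f -> ~ lt (inr e) (inr f)) -> Cut D c.
Proof.
move=> De ec emax; split; first by right; exists e.
by case=> f [Df fc]; apply: emax Df (lt_post_pre ec fc).
Qed.

Lemma preset_in_Cut (G D : event O -> Prop) g c : is_config G -> G g ->
  (forall x, D x -> G x) -> ~ D g -> (forall x, past g x -> D x) -> cpre g c -> Cut D c.
Proof.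
move=> [Gcf _] Gg DG Dg gD gc; split.
  case: (min_cond_or_post c) => [|[e ec]]; first by left.
  by right; exists e; split=> //; apply: gD; exact: lt_post_pre ec gc.
case=> f [Df fc]; have fg : f <> g by move=> fg; apply: Dg; rewrite -fg.
by apply: Gcf (DG _ Df) Gg _; exists f, g, c; do !split=> //; right.
Qed.

Lemma Cut_add (D : event O -> Prop) g c : is_config D -> ~ D g ->
  Cut (fun x => D x \/ x = g) c <-> (Cut D c /\ ~ cpre g c) \/ cpost g c.
Proof.
move=> HD Dg.
have gmax y : D y \/ y = g -> ~ lt (inr g) (inr y).
  by case=> [Dy gy|->]; [apply: Dg; exact: HD.2 _ _ Dy gy | exact: lt_irrefl].
split.
- case=> prod cons; case: (classic (cpost g c)) => [|ngc]; [by right | left].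
  split; last by move=> gc; apply: cons; exists g; split=> //; right.
  split; last by case=> f [Df fc]; apply: cons; exists f; split=> //; left.
  case: prod => [|[e [[De|->] ec]]] //; [by left | by right; exists e].
- case=> [[[prod cons] ngc]|gc]; last exact: postset_in_Cut (or_intror erefl) gc gmax.
  split; first by case: prod => [|[e [De ec]]]; [left | right; exists e; split=> //; left].
  by case=> f [[Df|->] fc]; [apply: cons; exists f | apply: ngc].
Qed.

Lemma config_ind (G : event O -> Prop) (P : (event O -> Prop) -> Prop) :
  (forall D g, is_config D -> is_config (fun x => D x \/ x = g) ->
     (forall x, D x -> G x) -> G g -> ~ D g -> (forall x, past g x -> D x) ->
     P D -> P (fun x => D x \/ x = g)) ->
  forall (l : list (node O)) (B D : event O -> Prop),
    is_config B -> is_config D -> (forall x, B x -> D x) -> (forall x, D x -> G x) ->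
    (forall x, D x -> ~ B x -> List.In (inr x) l) -> P B -> P D.
Proof.
move=> step; elim=> [|a l IH] B D HB HD BD DG Dl PB.
  have -> // : D = B.
  by apply: pred_ext => x; split=> [Dx|/BD //]; apply: NNPP => /(Dl x Dx).
case: (classic (exists x, a = inr x /\ D x /\ ~ B x)) => [[x [ax [Dx Bx]]]|na]; last first.
  apply: IH HB HD BD DG _ PB => y Dy By.
  by case: (Dl y Dy By) => // ay; case: na; exists y.
subst a.
(* Split off x and everything above it, reach that, then add x back. *)
pose D' y := D y /\ ~ le (inr x) (inr y).
have xD' y : past x y -> D' y.
  move=> yx; split; first exact: HD.2 _ _ Dx yx.
  by move=> xy; exact: lt_irrefl (le_lt_trans xy yx).
have HD' : is_config D'.
  apply: (config_sub HD (fun y (D'y : D' y) => D'y.1)) => y z [Dz xz] yz.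
  split; first exact: HD.2 _ _ Dz yz.
  by move=> xy; apply: xz; left; exact: le_lt_trans xy yz.
have BD' y : B y -> D' y.
  move=> By; split; first exact: BD.
  by case=> [xy|[xy]]; apply: Bx; [exact: HB.2 _ _ By xy | rewrite xy].
have HD'' : is_config (fun y => D' y \/ y = x).
  apply: config_sub HD _ _ => [y [[]|->] //|y z [D'z|->] yz]; left; last exact: xD'.
  exact: HD'.2 _ _ D'z yz.
have ninD' : ~ D' x by case=> _; apply; right.
apply: (IH (fun y => D' y \/ y = x)) => //.
- by move=> y [[]|->].
- move=> y Dy yD''; have By : ~ B y by move/BD' => ?; apply: yD''; left.
  by case: (Dl y Dy By) => // -[xy]; exfalso; apply: yD''; right.
- apply: step => //; [by move=> y [/DG] | exact: DG |].
  apply: (IH B D' HB HD' BD' (fun y (D'y : D' y) => DG y D'y.1) _ PB) => y [Dy nxy] By.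
  by case: (Dl y Dy By) => // -[xy]; exfalso; apply: nxy; right; rewrite xy.
Qed.

End OccurrenceNet.

Section Realization.

Variables (N : net) (M0 : marking N) (O : onet).
Variables (hc : cond O -> place N) (he : event O -> trans N).
Hypothesis safe : one_safe M0.
Hypothesis bp : branching_process M0 hc he.
Implicit Types (e f g : event O) (c : cond O) (D : event O -> Prop) (M : marking N).

Let occ : occurrence_net O := bp.1.

Lemma preP e p : pre (he e) p <-> exists c, cpre e c /\ hc c = p.
Proof.
case: bp => _ [_ [/(_ e) [maps [_ onto]] _]].
by split=> [/onto|[c [ec <-]]] //; exact: maps.
Qed.

Lemma postP e p : post (he e) p <-> hpost hc e p.
Proof.
case: bp => _ [_ [_ [/(_ e) [maps [_ onto]] _]]].
by split=> [/onto|[c [ec <-]]] //; exact: maps.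
Qed.

Lemma post_inj e c c' : cpost e c -> cpost e c' -> hc c = hc c' -> c = c'.
Proof. by case: bp => _ [_ [_ [/(_ e) [_ [inj _]] _]]]; exact: inj. Qed.

(* Injectivity of [hc] on the cut is part of the invariant: it is what the
   next firing needs, and 1-safety is what re-establishes it. *)
Definition realizes D M : Prop :=
  [/\ reachable M0 M, forall p, 0 < M p <-> Mark hc D p
    & forall c c', Cut D c -> Cut D c' -> hc c = hc c' -> c = c'].

Lemma realizes_empty : realizes (fun _ => False) M0.
Proof.
case: bp => _ [[maps [inj onto]] _].
have Cut0 c : Cut (fun _ => False) c <-> min_cond c.
  by split=> [[[|[e [[] _]]] _] //|mc]; split=> [|[e [[] _]]]; first left.
split=> [|p|c c' /Cut0 mc /Cut0 mc']; first exact: reach_init; last exact: inj.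
split=> [/onto [c [mc <-]]|[c [/Cut0 mc <-]]]; last exact: maps.
by exists c; split=> //; apply/Cut0.
Qed.

Lemma realizes_enabled (G : event O -> Prop) D g M : realizes D M -> is_config G -> G g ->
  (forall x, D x -> G x) -> ~ D g -> (forall x, past g x -> D x) -> enabled M (he g).
Proof.
move=> [_ supp _] HG Gg DG Dg gD p /preP [c [gc <-]]; apply/supp.
by exists c; split=> //; exact: preset_in_Cut HG Gg DG Dg gD gc.
Qed.

Lemma realizes_fire D g M : realizes D M -> is_config D ->
  is_config (fun x => D x \/ x = g) -> ~ D g -> (forall x, past g x -> D x) ->
  enabled M (he g) /\ realizes (fun x => D x \/ x = g) (fire M (he g)).
Proof.
move=> RM HD HD1 Dg gD.
have DD1 x : D x -> D x \/ x = g by left.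
have en : enabled M (he g) := realizes_enabled RM HD1 (or_intror erefl) DD1 Dg gD.
have Cut1 c := Cut_add occ c HD Dg.
case: RM => RM supp inj; have Rfire := reach_step RM en.
have not_pre c : Cut D c -> ~ cpre g c -> ~~ pre (he g) (hc c).
  move=> Dc ngc; apply/negP => /preP [c' [gc' c'c]]; apply: ngc.
  rewrite -(inj c' c) //; exact: preset_in_Cut HD1 (or_intror erefl) DD1 Dg gD gc'.
have Mark1 p : Mark hc (fun x => D x \/ x = g) p <->
    (Mark hc D p /\ ~~ pre (he g) p) \/ post (he g) p.
  rewrite postP; split=> [[c [/Cut1 [[Dc ngc]|gc] <-]]|[[[c [Dc <-]] npre]|[c [gc <-]]]].
  - by left; split; [exists c | exact: not_pre].
  - by right; exists c.
  - exists c; split=> //; apply/Cut1; left; split=> // gc.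
    by move/negP: npre; apply; apply/preP; exists c.
  - by exists c; split=> //; apply/Cut1; right.
have one_token c : Cut D c -> ~ cpre g c -> ~ post (he g) (hc c).
  move=> Dc ngc gp; have Mp : 0 < M (hc c) by apply/supp; exists c.
  move: (safe Rfire (hc c)) (not_pre c Dc ngc); rewrite /fire gp.
  by case: (pre _ _) => //=; lia.
have post_hc c : cpost g c -> post (he g) (hc c) by move=> gc; apply/postP; exists c.
split=> //; split=> // [p|c c' /Cut1 [[Dc ngc]|gc] /Cut1 [[Dc' ngc']|gc'] cc'].
- rewrite fire_gt0 ?(safe RM) // Mark1 -supp.
  by split=> [/orP [/andP|]|[/andP ->|->]]; rewrite ?orbT; auto.
- exact: inj.
- by case: (one_token c Dc ngc); rewrite cc'; exact: post_hc.
- by case: (one_token c' Dc' ngc'); rewrite -cc'; exact: post_hc.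
- exact: post_inj gc gc' cc'.
Qed.

Lemma realizable D (l : list (node O)) : is_config D ->
  (forall x, D x -> List.In (inr x) l) -> exists M, realizes D M.
Proof.
move=> HD Dl.
apply: (config_ind occ (G := D) (P := fun D => exists M, realizes D M) _
  (l := l) (B := fun _ => False) _ HD).
- move=> D0 g HD0 HD1 _ _ D0g gD0 [M RM].
  by exists (fire M (he g)); case: (realizes_fire RM HD0 HD1 D0g gD0).
- by split=> // e e' [].
- by [].
- by [].
- by move=> x Dx _; exact: Dl.
- by exists M0; exact: realizes_empty.
Qed.

Lemma Cut_inj D (l : list (node O)) : is_config D -> (forall x, D x -> List.In (inr x) l) ->
  forall c c', Cut D c -> Cut D c' -> hc c = hc c' -> c = c'.
Proof. by move=> HD /(realizable HD) [M []]. Qed.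

Lemma hpost_pre_disjoint e f g p : max_adj e f -> past f g -> ~ local_config e g ->
  hpost hc e p -> pre (he g) p -> False.
Proof.
move=> ef fg eg [c' [ec' <-]] /preP [c [gc cc']].
pose E x := past g x \/ local_config e x.
have Ef x : E x -> past f x.
  by case=> [xg|[xe|->]]; [exact: t_trans xg fg | exact: t_trans xe ef.1 | exact: ef.1].
have HE : is_config E.
  apply: (config_sub (past_is_config occ f) Ef) => x y [yg|ye] xy.
    by left; exact: (past_is_config occ g).2 _ _ yg xy.
  by right; exact: (local_config_is_config occ e).2 _ _ ye xy.
have [l fl] := past_finite occ f.
have cut_c : Cut E c.
  apply: preset_in_Cut (past_is_config occ f) fg Ef _ (fun x xg => or_introl xg) gc.
  by case=> [/(lt_irrefl occ)|]; last exact: eg.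
have cut_c' : Cut E c'.
  apply: postset_in_Cut (or_intror (or_intror erefl)) ec' _ => x /Ef.
  exact: max_adj_not_lt_past ef.
have := Cut_inj HE (fun x Ex => fl x (Ef x Ex)) cut_c cut_c' cc' => c_eq.
by rewrite c_eq in gc; exact: max_adj_not_lt_past ef fg (lt_post_pre ec' gc).
Qed.

Lemma realizes_past_enabled g M : realizes (past g) M -> enabled M (he g).
Proof.
move=> RM; apply: (realizes_enabled RM (local_config_is_config occ g)) => // [|x|].
- by right.
- by left.
- exact: lt_irrefl.
Qed.

Lemma local_config_realized e :
  exists L, [/\ reachable M0 L, enabled L (he e) & realizes (local_config e) (fire L (he e))].
Proof.
have [l el] := past_finite occ e.
have [L RL] := realizable (past_is_config occ e) el.
have [Le RLe] := realizes_fire RL (past_is_config occ e) (local_config_is_config occ e)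
  (@lt_irrefl _ occ (inr e)) (fun x xe => xe).
by exists L; split=> //; case: RL.
Qed.

Lemma fire_postponed e f t L : max_adj e f -> (forall p, post t p -> hpost hc e p) ->
  reachable M0 L -> enabled L t -> realizes (local_config e) (fire L t) ->
  exists L', [/\ reachable M0 L', enabled L' t & realizes (past f) (fire L' t)].
Proof.
move=> ef te RL Lt RK; have [l fl] := past_finite occ f.
have e_past x : local_config e x -> past f x.
  by case=> [xe|->]; [exact: t_trans xe ef.1 | exact: ef.1].
pose P D := (forall x, local_config e x -> D x) /\
  exists L', [/\ reachable M0 L', enabled L' t & realizes D (fire L' t)].
suff [] : P (past f) by [].
apply: (config_ind occ (G := past f) (P := P) _ (l := l) (B := local_config e)
  (local_config_is_config occ e) (past_is_config occ f) e_past) => //.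
- move=> D g HD HD1 _ gf Dg gD [eD [L' [RL' L't RD]]].
  split=> [x /eD|]; first by left.
  have [L'tg RD1] := realizes_fire RD HD HD1 Dg gD.
  have disj p : ~~ (pre (he g) p && post t p).
    apply/negP => /andP [gp /te ep].
    exact: (hpost_pre_disjoint ef gf (fun eg => Dg (eD g eg)) ep gp).
  have [L'g L'gt comm] := fire_commute safe RL' L't L'tg disj.
  by exists (fire L' (he g)); split=> //; [exact: reach_step | rewrite comm].
- by move=> x ? _; exact: fl.
- by split=> //; exists L.
Qed.

End Realization.

Theorem proposition6 (N : net) (M0 : marking N) (O : onet)
    (hc : cond O -> place N) (he : event O -> trans N)
    (prec : (event O -> Prop) -> (event O -> Prop) -> Prop) :
  one_safe M0 ->
  unfolding M0 hc he ->
  adequate_order prec ->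
  forall e1 e1' : event O,
    in_prefix hc prec e1 ->
    corresponding hc prec e1 e1' ->
    (forall p, hpost hc e1 p <-> hpost hc e1' p) ->
    forall e2 : event O,
      in_prefix hc prec e2 ->
      max_adj e1' e2 ->
      tar M0 (he e1) (he e2).
Proof.
move=> safe [bp _] _ e1 e1' _ [Mark_eq _] hpost_eq e2 _ adj.
have occ := bp.1.
have [L [RL L_e1 R_e1]] := local_config_realized safe bp e1.
have R_e1' : realizes M0 hc (local_config e1') (fire L (he e1)).
  case: R_e1 => R supp _; split=> // [p|]; first by rewrite supp; exact: Mark_eq.
  have [l e1'l] := local_config_finite occ e1'.
  exact: (Cut_inj safe bp (local_config_is_config occ e1') e1'l).
have e1_e1' p : post (he e1) p -> hpost hc e1' p by move/(postP bp)/hpost_eq.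
have [L' [RL' L'e1 R_e2]] := fire_postponed safe bp adj e1_e1' RL L_e1 R_e1'.
by exists L'; split=> //; split=> //; exact: (realizes_past_enabled bp R_e2).
Qed.
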